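(* Let $G_m$ be a totally ascending braid Gauss diagram with $r$ circles. Then $r=m+w(G_m)$.
   Context: Braid Gauss diagrams. $B_m$ is the Artin braid group with generators $\sigma_1,\dots,\sigma_{m-1}$. For a word $\beta$ in $\sigma_i^{\pm1}$, the closed braid diagram $D$ of $\beta$ is obtained by joining the top and bottom endpoints of the $m$ strands by $m$ parallel closing strands; it represents an oriented link. The Gauss diagram $G$ of $D$ has one oriented circle parametrizing each component of $D$, and for each crossing an arrow joining its two preimages, pointing from the overpassing preimage to the underpassing one, carrying the sign (local writhe) of the crossing. An arc of $G$ is a connected component of the complement in the circles of all arrow endpoints. The braid Gauss diagram $G_m$ is $G$ together with labels $a_1,\dots,a_m$, where $a_i$ is the arc of $G$ containing the preimage of the $i$-th closing strand. The writhe $w(G_m)$ is the sum of the signs of all arrows. Totally ascending. Let $G_m$ have $r$ circles. For each circle $C$ let $\mu(C)$ be the smallest index $i$ such that the arc $a_i$ lies on $C$. Order the circles so that $\mu(C_1)<\mu(C_2)<\dots<\mu(C_r)$ (so $\mu(C_1)=1$); $C_i$ is the $i$-th circle. $G_m$ is totally ascending if for every pair $1\le i\le j\le r$: walking once around $C_i$ in its orientation, starting from the arc $a_{\mu(C_i)}$, every arrow connecting $C_i$ and $C_j$ (for $i=j$: every arrow with both endpoints on $C_i$) is met first at its head. *)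

From HB Require Import structures.
From mathcomp Require Import all_boot all_order all_algebra.
Set Implicit Arguments. Unset Strict Implicit. Unset Printing Implicit Defensive.
Import Order.TTheory GRing.Theory Num.Theory.

(*  - strand positions are 0-based: 0,...,m-1 (position p corresponds   *)
(*    to the paper's index p+1; closing strand p gives arc a_{p+1});    *)
(*  - a letter (i, e) : nat * bool denotes sigma_{i+1} if e = true and  *)
(*    sigma_{i+1}^{-1} if e = false; it exchanges positions i and i+1;  *)
(*  - crossings are numbered 0,...,size w - 1 in word order, and the    *)
(*    strands are traversed from the top (before letter 0) to the       *)
(*    bottom (after the last letter), then back up the closing strands; *)
(*  - the preimage of crossing k on the strand at position i (just      *)
(*    before the crossing) is the point (k,false), the one on the       *)
(*    strand at position i+1 is (k,true);                               *)
(*  - for sigma_{i+1} (e = true) the strand at position i passes over,  *)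
(*    so the arrow points to (k,true), and the sign is +1; for the      *)
(*    inverse letter the strand at position i+1 passes over, the arrow  *)
(*    points to (k,false), and the sign is -1.                          *)

Definition letter := (nat * bool)%type.
Definition point := (nat * bool)%type.

Definition valid_word (m : nat) (w : seq letter) : bool :=
  all (fun l : letter => l.1.+1 < m) w.

Definition swap_pos (i p : nat) : nat :=
  if p == i then i.+1 else if p == i.+1 then i else p.

Definition endpos (w : seq letter) (p : nat) : nat :=
  foldl (fun q (l : letter) => swap_pos l.1 q) p w.

(* crossing preimages met along the strand starting at top position p,
   in order; k is the index of the first letter of w *)
Fixpoint strand_pts (w : seq letter) (k p : nat) : seq point :=
  match w with
  | [::] => [::]
  | l :: w' =>
      (if p == l.1 then [:: (k, false)]
       else if p == l.1.+1 then [:: (k, true)] else [::])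
      ++ strand_pts w' k.+1 (swap_pos l.1 p)
  end.

(* closing strand p leads from bottom position p back to top position p,
   so following a component, closing strand x is followed by closing
   strand (closing_next x) *)
Definition closing_next (m : nat) (w : seq letter) (x : 'I_m) : 'I_m :=
  insubd x (endpos w x).

(* the circle (component) through closing strand x, identified with the
   set of closing strands it contains *)
Definition circle_of (m : nat) (w : seq letter) (x : 'I_m) : {set 'I_m} :=
  [set y | fconnect (closing_next w) x y].

(* the set of circles of the Gauss diagram; r is its cardinality *)
Definition circles (m : nat) (w : seq letter) : {set {set 'I_m}} :=
  [set circle_of w x | x : 'I_m].

Definition is_mu (m : nat) (w : seq letter) (x : 'I_m) : bool :=
  [forall y in circle_of w x, x <= y].

(* the arrow endpoints met when walking once around the circle through
   closing strand x, starting from (the arc containing) closing strand x *)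
Definition walk (m : nat) (w : seq letter) (x : 'I_m) : seq point :=
  flatten [seq strand_pts w 0 (val y) | y <- orbit (closing_next w) x].

(* side of crossing k where the head (underpassing preimage) lies *)
Definition head_side (w : seq letter) (k : nat) : bool :=
  (nth (0, true) w k).2.

Definition first_met (s : seq point) (k : nat) : point :=
  nth (0, false) s (find (fun pt : point => pt.1 == k) s).

(* totally ascending: for circles C_i, C_j with mu(C_i) <= mu(C_j), every
   arrow having one endpoint on C_i and the other on C_j is met first at
   its head when walking around C_i from arc a_{mu(C_i)} *)
Definition totally_ascending (m : nat) (w : seq letter) : Prop :=
  forall x y : 'I_m, is_mu w x -> is_mu w y -> x <= y ->
  forall (k : nat) (b : bool),
    (k, b) \in walk w x -> (k, ~~ b) \in walk w y ->
    (first_met (walk w x) k).2 = head_side w k.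

Definition writhe (w : seq letter) : int :=
  (\sum_(l <- w) (if l.2 then 1 else -1))%R.

From HB Require Import structures.
From mathcomp Require Import all_boot all_order all_algebra zify.
Set Implicit Arguments. Unset Strict Implicit. Unset Printing Implicit Defensive.
Import GRing.Theory.

(* Following a component of the closed braid, closing strand x is followed by
   closing strand f x, where f = closing_next w is a permutation of the strands
   whose cycles are the circles.  Order the strands by their walk rank: first by
   the minimal strand mu of their circle, then by the order in which the walk
   around that circle starting at mu meets them.  For every level k of the braid
   let inv(k) count the pairs of strands whose left-to-right order at level k
   disagrees with the walk rank.
   - At the top the strands are in their natural order, at the bottom in the
     order of f; a reindexing argument shows inv(bottom) = inv(top) + (m - r),
     one extra inversion for each strand that is not the minimum of its circle.
   - Crossing k swaps two adjacent strands, so inv changes by exactly one; total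
     ascendingness forces inv(k) - inv(k+1) to be the sign of the crossing.
   Telescoping over the word gives w(G_m) = inv(top) - inv(bottom) = r - m. *)

Lemma swap_posK i : involutive (swap_pos i).
Proof.
move=> p; rewrite /swap_pos; case: (eqVneq p i) => [->|ne1].
  by rewrite eqxx (gtn_eqF (ltnSn i)).
case: (eqVneq p i.+1) => [->|ne2]; first by rewrite eqxx.
by rewrite (negPf ne1) (negPf ne2).
Qed.

Lemma swap_pos_lt m i p : p < m -> i.+1 < m -> swap_pos i p < m.
Proof.
rewrite /swap_pos => pm im; case: ifP => // _.
by case: ifP => // _; exact: ltnW.
Qed.

Lemma ltn_swap_pos i a b : a != b ->
  (swap_pos i a < swap_pos i b) =
  (if (a == i) && (b == i.+1) then false
   else if (a == i.+1) && (b == i) then true else a < b).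
Proof.
move=> nab; rewrite /swap_pos.
case: (eqVneq a i) => [ai|nai]; case: (eqVneq b i) => [bi|nbi] /=;
 case: (eqVneq a i.+1) => [ai1|nai1]; case: (eqVneq b i.+1) => [bi1|nbi1] /=;
 lia.
Qed.

Lemma endpos_cons l t p : endpos (l :: t) p = endpos t (swap_pos l.1 p).
Proof. by []. Qed.

Lemma endpos_take_S (w : seq letter) k p : k < size w ->
  endpos (take k.+1 w) p = swap_pos (nth (0, true) w k).1 (endpos (take k w) p).
Proof. by move=> kw; rewrite (take_nth (0, true) kw) /endpos foldl_rcons. Qed.

Lemma endpos_inj t : injective (endpos t).
Proof.
elim: t => [|l t IH] p q //; rewrite !endpos_cons => /IH.
exact: (can_inj (swap_posK l.1)).
Qed.

Lemma endpos_lt m t p : all (fun l : letter => l.1.+1 < m) t -> p < m -> endpos t p < m.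
Proof.
elim: t p => [|l t IH] p // /andP[lm tm] pm.
by rewrite endpos_cons; apply: IH => //; exact: swap_pos_lt.
Qed.

Definition startpos (t : seq letter) (i : nat) : nat :=
  foldr (fun (l : letter) q => swap_pos l.1 q) i t.

Lemma endpos_startpos t i : endpos t (startpos t i) = i.
Proof. by elim: t i => [|l t IH] i //; rewrite endpos_cons [startpos _ _]/= swap_posK IH. Qed.

Lemma startpos_lt m t i : all (fun l : letter => l.1.+1 < m) t -> i < m -> startpos t i < m.
Proof.
elim: t i => [|l t IH] i //= /andP[lm tm] im.
by apply: swap_pos_lt => //; exact: IH.
Qed.

Lemma all_take (T : Type) (a : pred T) s n : all a s -> all a (take n s).
Proof. by rewrite -{1}(cat_take_drop n s) all_cat => /andP[]. Qed.

Lemma mem_strand_pts w k0 p k b :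
  ((k, b) \in strand_pts w k0 p) =
  [&& k0 <= k, k < k0 + size w &
      endpos (take (k - k0) w) p == (nth (0, true) w (k - k0)).1 + b].
Proof.
elim: w k0 p => [|l w IH] k0 p /=.
  by rewrite in_nil addn0; case: (leqP k0 k) => //= h; rewrite ltnNge h.
set here := (if p == l.1 then _ else _).
have not_here k' : k' != k0 -> ((k', b) \in here) = false.
  by move=> nk; rewrite /here; case: ifP => _; [|case: ifP => _];
     rewrite ?inE //= xpair_eqE (negPf nk).
rewrite mem_cat IH; case: (ltngtP k k0) => [lt|gt|->].
- by rewrite not_here // ltn_eqF.
- have -> : k - k0 = (k - k0.+1).+1 by rewrite subnS prednK // subn_gt0.
  by rewrite not_here ?(gtn_eqF gt) //= addnS -addSn.
- rewrite subnn /= orbF addnS ltnS leq_addr /= {IH not_here}/here.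
  case: (eqVneq p l.1) => [->|ne1].
    by rewrite inE xpair_eqE eqxx /=; case: b; rewrite ?addn0 ?addn1 ?eqxx // (ltn_eqF (ltnSn _)).
  case: (eqVneq p l.1.+1) => [->|ne2].
    by rewrite inE xpair_eqE eqxx /=; case: b; rewrite ?addn0 ?addn1 ?eqxx // (gtn_eqF (ltnSn _)).
  by rewrite in_nil; case: b; rewrite ?addn0 ?addn1 ?(negPf ne1) ?(negPf ne2).
Qed.

(* The walk rank of a permutation f of 'I_m.  For f = closing_next w the
   cycles of f are the circles and is_cycle_min is the predicate is_mu. *)

Section WalkRank.
Variables (m : nat) (f : 'I_m -> 'I_m).
Hypothesis f_inj : injective f.

Definition cycle_min (x : 'I_m) : 'I_m := [arg min_(y < x | fconnect f x y) (y : nat)].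

Definition is_cycle_min (x : 'I_m) : bool := [forall y in [set y | fconnect f x y], x <= y].

Definition walk_index (x : 'I_m) : nat := findex f (cycle_min x) x.

(* lexicographic code of (cycle_min x, walk_index x); walk_index x < m *)
Definition walk_rank (x : 'I_m) : nat := cycle_min x * m + walk_index x.

Lemma cycle_min_spec x : fconnect f x (cycle_min x) /\ forall y, fconnect f x y -> cycle_min x <= y.
Proof. by rewrite /cycle_min; case: arg_minnP => [|z]; [exact: connect0 | split]. Qed.

Lemma cycle_min_conn x : fconnect f (cycle_min x) x.
Proof. by rewrite (fconnect_sym f_inj); case: (cycle_min_spec x). Qed.

Lemma cycle_min_le x y : fconnect f x y -> cycle_min x <= y.
Proof. by case: (cycle_min_spec x) => _; apply. Qed.

Lemma cycle_min_eq x y : fconnect f x y -> cycle_min x = cycle_min y.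
Proof.
move=> cxy; have cyx : fconnect f y x by rewrite (fconnect_sym f_inj).
have to_min z : fconnect f z (cycle_min z) by case: (cycle_min_spec z).
apply: val_inj; apply/eqP; rewrite eqn_leq !cycle_min_le //.
- exact: connect_trans cyx (to_min x).
- exact: connect_trans cxy (to_min y).
Qed.

Lemma is_cycle_minE x : is_cycle_min x = (cycle_min x == x).
Proof.
apply/forall_inP/eqP => [minx | Ex y]; last by rewrite inE => /cycle_min_le; rewrite Ex.
apply: val_inj; apply/eqP; rewrite eqn_leq cycle_min_le ?connect0 //=.
by apply: minx; rewrite inE; case: (cycle_min_spec x).
Qed.

Lemma cycle_min_idem x : cycle_min (cycle_min x) = cycle_min x.
Proof. exact: cycle_min_eq (cycle_min_conn x). Qed.

Lemma is_cycle_min_min x : is_cycle_min (cycle_min x).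
Proof. by rewrite is_cycle_minE cycle_min_idem. Qed.

Lemma cycle_min_f x : cycle_min (f x) = cycle_min x.
Proof. by rewrite (cycle_min_eq (fconnect1 f x)). Qed.

Lemma walk_index_lt_order x : walk_index x < order f (cycle_min x).
Proof. exact: findex_max (cycle_min_conn x). Qed.

Lemma walk_index_lt x : walk_index x < m.
Proof.
apply: leq_trans (walk_index_lt_order x) _.
by apply: leq_trans (max_card _) _; rewrite card_ord.
Qed.

Lemma iter_walk_index x : iter (walk_index x) f (cycle_min x) = x.
Proof. exact: iter_findex (cycle_min_conn x). Qed.

Lemma walk_index_inj x y :
  cycle_min x = cycle_min y -> walk_index x = walk_index y -> x = y.
Proof. by move=> Em Ed; rewrite -(iter_walk_index x) -(iter_walk_index y) Em Ed. Qed.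

Lemma lex_mulnD u v a b : a < m -> b < m ->
  (u * m + a < v * m + b) = (u < v) || ((u == v) && (a < b)).
Proof.
move=> am bm; case: (ltngtP u v) => [uv|vu|->] /=; last by rewrite ltn_add2l.
- apply: (@leq_trans (u * m + m)); first by rewrite ltn_add2l.
  by apply: leq_trans (leq_addr _ _); rewrite -mulSnr leq_mul2r uv orbT.
- apply/negbTE; rewrite -leqNgt; apply: (@leq_trans (v * m + m)).
    by rewrite ltnW // ltn_add2l.
  by apply: leq_trans (leq_addr _ _); rewrite -mulSnr leq_mul2r vu orbT.
Qed.

Lemma walk_rank_lt x y : (walk_rank x < walk_rank y) =
  (cycle_min x < cycle_min y) || ((cycle_min x == cycle_min y) && (walk_index x < walk_index y)).
Proof. by rewrite lex_mulnD ?walk_index_lt. Qed.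

Lemma walk_rank_inj : injective walk_rank.
Proof.
move=> x y Exy; apply/eqP; apply: contraT => nxy.
suff: (walk_rank x < walk_rank y) || (walk_rank y < walk_rank x) by rewrite Exy ltnn.
rewrite !walk_rank_lt; case: (ltngtP (cycle_min x) (cycle_min y)) => [||Emn]; rewrite ?orbT //.
have Em : cycle_min x = cycle_min y by apply: val_inj.
rewrite Em eqxx /=; case: (ltngtP (walk_index x) (walk_index y)) => // Ed.
by rewrite (walk_index_inj Em Ed) eqxx in nxy.
Qed.

Lemma cycle_min_le_rank x y : walk_rank x < walk_rank y -> cycle_min x <= cycle_min y.
Proof. by rewrite walk_rank_lt => /orP[/ltnW // | /andP[/eqP-> _]]. Qed.

Lemma walk_index_f x : f x != cycle_min x -> walk_index (f x) = (walk_index x).+1.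
Proof.
move=> ne; have lt := walk_index_lt_order x.
have Efx : f x = iter (walk_index x).+1 f (cycle_min x) by rewrite iterS iter_walk_index.
case: (ltngtP (walk_index x).+1 (order f (cycle_min x))) => [lt'|gt|eq].
- by rewrite /walk_index cycle_min_f Efx findex_iter.
- by rewrite ltnS leqNgt lt in gt.
- by rewrite Efx eq iter_order ?eqxx in ne.
Qed.

Lemma walk_index_f_min x : f x = cycle_min x -> (walk_index x).+1 = order f (cycle_min x).
Proof.
move=> E; have lt := walk_index_lt_order x.
have Efx : f x = iter (walk_index x).+1 f (cycle_min x) by rewrite iterS iter_walk_index.
case: (ltngtP (walk_index x).+1 (order f (cycle_min x))) => [lt'|gt|//].
- by have := findex_iter lt'; rewrite -Efx E findex0.
- by rewrite ltnS leqNgt lt in gt.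
Qed.

Lemma walk_rank_min_first a b :
  is_cycle_min a -> fconnect f a b -> (walk_rank b < walk_rank a) = false.
Proof.
rewrite is_cycle_minE => /eqP Ea cab.
by rewrite walk_rank_lt -(cycle_min_eq cab) ltnn /= /walk_index Ea findex0 ltn0 andbF.
Qed.

(* Comparing walk ranks of p, q and of their successors f p < f q: applying f
   preserves the order, except that the minimum of a cycle is now first. *)
Lemma walk_rank_shift p q : f p < f q ->
  (walk_rank q < walk_rank p) =
  (walk_rank (f q) < walk_rank (f p)) || (is_cycle_min (f p) && fconnect f (f p) (f q)).
Proof.
move=> lt; have mup := cycle_min_f p; have muq := cycle_min_f q.
case: (eqVneq (cycle_min p) (cycle_min q)) => [Em|Nm]; last first.
  have -> : fconnect f (f p) (f q) = false.
    by apply/negbTE/negP => /cycle_min_eq; rewrite mup muq; exact/eqP.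
  by rewrite andbF orbF !walk_rank_lt mup muq eq_sym (negPf Nm).
have cpq : fconnect f (f p) (f q).
  apply: (connect_trans (y := cycle_min q)); last by rewrite -muq cycle_min_conn.
  by rewrite -Em -mup (fconnect_sym f_inj) cycle_min_conn.
rewrite cpq andbT is_cycle_minE mup !walk_rank_lt mup muq Em eqxx ltnn /=.
case: (eqVneq (f p) (cycle_min p)) => [Ep|Np].
- rewrite -Em -Ep eqxx orbT.
  have := walk_index_lt_order q; rewrite -Em -(walk_index_f_min Ep) ltnS => le.
  rewrite ltn_neqAle le andbT; apply: contraTneq lt => /esym/(walk_index_inj Em) ->.
  by rewrite ltnn.
- have Nq : f q != cycle_min q.
    apply: contraTneq lt => ->; rewrite -Em -mup -leqNgt.
    by rewrite cycle_min_le ?connect0.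
  by rewrite (walk_index_f Np) (walk_index_f Nq) ltnS -Em eq_sym (negPf Np) orbF.
Qed.

(* Every strand that is not a cycle minimum is preceded by exactly one cycle
   minimum on its own cycle, namely cycle_min b. *)
Lemma nonmin_count (b : 'I_m) :
  \sum_(a : 'I_m) (((a < b) && is_cycle_min a && fconnect f a b) : nat) = ~~ is_cycle_min b.
Proof.
have cmin_only a : is_cycle_min a -> fconnect f a b -> a = cycle_min b.
  by rewrite is_cycle_minE => /eqP Ea /cycle_min_eq; rewrite Ea.
case Hb: (is_cycle_min b) => /=.
  apply: big1 => a _; case Ha: (is_cycle_min a); case Hc: (fconnect f a b);
    rewrite ?andbF //= andbT.
  by move: Hb; rewrite (cmin_only a Ha Hc) is_cycle_minE => /eqP->; rewrite ltnn.
have Hmb : cycle_min b < b.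
  rewrite ltn_neqAle cycle_min_le ?connect0 // andbT.
  by move: Hb; rewrite is_cycle_minE => /negbT.
rewrite (bigD1 (cycle_min b)) //= Hmb is_cycle_min_min cycle_min_conn /=.
rewrite big1 // => a /negPf Na.
case Ha: (is_cycle_min a); case Hc: (fconnect f a b); rewrite ?andbF //=.
by rewrite (cmin_only a Ha Hc) eqxx in Na.
Qed.

Lemma inversions_shift :
  \sum_(pq : 'I_m * 'I_m) (((f pq.1 < f pq.2) && (walk_rank pq.2 < walk_rank pq.1)) : nat)
  = \sum_(pq : 'I_m * 'I_m) (((pq.1 < pq.2) && (walk_rank pq.2 < walk_rank pq.1)) : nat)
    + #|[pred b : 'I_m | ~~ is_cycle_min b]|.
Proof.
have f2_inj : injective (fun pq : 'I_m * 'I_m => (f pq.1, f pq.2)).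
  by move=> [a b] [c e] /= [/f_inj-> /f_inj->].
have -> : #|[pred b : 'I_m | ~~ is_cycle_min b]| =
   \sum_(pq : 'I_m * 'I_m) (((pq.1 < pq.2) && is_cycle_min pq.1 && fconnect f pq.1 pq.2) : nat).
  rewrite -(pair_bigA _ (fun a b : 'I_m => (((a < b) && is_cycle_min a && fconnect f a b) : nat))).
  rewrite exchange_big /= -sum1_card big_mkcond /=.
  by apply: eq_bigr => b _; rewrite nonmin_count inE; case: (is_cycle_min b).
rewrite [X in _ = X + _](reindex_inj f2_inj) [X in _ = _ + X](reindex_inj f2_inj) /=.
rewrite -big_split /=; apply: eq_bigr => [[p q]] _ /=.
case: (ltnP (f p) (f q)) => lt //=; rewrite walk_rank_shift //.
case E: (is_cycle_min (f p) && fconnect f (f p) (f q)); last by rewrite orbF addn0.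
by case/andP: E => /walk_rank_min_first mp /mp ->.
Qed.

Lemma card_cycles :
  #|[set [set y | fconnect f x y] | x : 'I_m]| = #|[pred x : 'I_m | is_cycle_min x]|.
Proof.
have -> : [set [set y | fconnect f x y] | x : 'I_m] =
          (fun x => [set y | fconnect f x y]) @: [set x : 'I_m | is_cycle_min x].
  apply/setP => C; apply/imsetP/imsetP => [[x _ ->]|[x _ ->]]; last by exists x.
  exists (cycle_min x); first by rewrite inE is_cycle_min_min.
  apply/setP => y; rewrite !inE; apply/idP/idP => H; apply: connect_trans H.
    exact: cycle_min_conn.
  by rewrite (fconnect_sym f_inj) cycle_min_conn.
rewrite card_in_imset; first by apply: eq_card => x; rewrite inE.
move=> a b; rewrite !inE !is_cycle_minE => /eqP Ea /eqP Eb E.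
have : b \in [set y | fconnect f a y] by rewrite E inE connect0.
by rewrite inE => /cycle_min_eq; rewrite Ea Eb.
Qed.

End WalkRank.

Definition on_arrow (k : nat) (pt : point) : bool := pt.1 == k.

Section FirstMet.
Variable k : nat.
Local Notation at_k := (on_arrow k).

Lemma first_met_cat_has s1 s2 : has at_k s1 -> first_met (s1 ++ s2) k = first_met s1 k.
Proof. by move=> h; rewrite /first_met find_cat h nth_cat -has_find h. Qed.

Lemma first_met_cat_hasN s1 s2 : ~~ has at_k s1 -> first_met (s1 ++ s2) k = first_met s2 k.
Proof. by move=> /negPf h; rewrite /first_met find_cat h nth_cat ltnNge leq_addr /= addKn. Qed.

Lemma first_met_single s b : (k, b) \in s -> (k, ~~ b) \notin s -> first_met s k = (k, b).
Proof.
move=> inb notb; have hs : has at_k s by apply/hasP; exists (k, b); rewrite // /on_arrow.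
have := nth_find (0, false) hs; have := mem_nth (0, false) (etrans (esym (has_find _ _)) hs).
rewrite /first_met; case: (nth _ _ _) => k' b' /= H; rewrite /on_arrow /= => /eqP Ek; subst k'.
by clear inb hs; case: b b' notb H => [] [] // /negP nb /nb.
Qed.

Lemma first_met_flatten (T : eqType) (g : T -> seq point) (a b : T) (o : seq T) :
  (forall z, has at_k (g z) -> z = a \/ z = b) -> has at_k (g a) ->
  index a o < index b o ->
  first_met (flatten (map g o)) k = first_met (g a) k.
Proof.
move=> only_ab ha; elim: o => [|z o IH] //=.
case: (eqVneq z a) => [->|nza]; first by rewrite first_met_cat_has.
case: (eqVneq z b) => [->|nzb //]; first by [].
rewrite ltnS => lt; rewrite first_met_cat_hasN ?IH //.
by apply/negP => /only_ab [] E; rewrite E eqxx in nza nzb.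
Qed.

End FirstMet.

Section Braid.
Variables (m : nat) (w : seq letter).
Hypothesis Hw : valid_word m w.
Local Notation f := (@closing_next m w).
Local Notation rank := (walk_rank f).
Local Notation strand p := (strand_pts w 0 (p : 'I_m)).

Lemma val_closing_next (x : 'I_m) : val (f x) = endpos w x.
Proof. by rewrite /closing_next val_insubd endpos_lt. Qed.

Lemma closing_next_inj : injective f.
Proof.
by move=> x y E; apply: val_inj; apply: (@endpos_inj w); rewrite -!val_closing_next E.
Qed.

Definition position k (p : 'I_m) : nat := endpos (take k w) p.

Lemma position_inj k : injective (position k).
Proof. by move=> x y /endpos_inj /val_inj. Qed.

Definition inverted k (pq : 'I_m * 'I_m) : nat :=
  (position k pq.1 < position k pq.2) && (rank pq.2 < rank pq.1).

Definition inversions k : nat := \sum_(pq : 'I_m * 'I_m) inverted k pq.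

Lemma mem_strand k b (p : 'I_m) :
  ((k, b) \in strand p) = (k < size w) && (position k p == (nth (0, true) w k).1 + b).
Proof. by rewrite mem_strand_pts subn0 add0n. Qed.

Lemma strand_sub_walk (p : 'I_m) pt : pt \in strand p -> pt \in walk w (cycle_min f p).
Proof.
move=> H; apply/flatten_mapP; exists p => //.
by rewrite -fconnect_orbit cycle_min_conn //; exact: closing_next_inj.
Qed.

Lemma walk_first_met k (a b : 'I_m) :
  (forall z : 'I_m, has (on_arrow k) (strand z) -> z = a \/ z = b) ->
  has (on_arrow k) (strand a) -> rank a < rank b ->
  first_met (walk w (cycle_min f a)) k = first_met (strand a) k.
Proof.
move=> only_ab ha lt; apply: (first_met_flatten only_ab ha).
have ina : a \in orbit f (cycle_min f a).
  by rewrite -fconnect_orbit cycle_min_conn //; exact: closing_next_inj.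
move: lt; rewrite (walk_rank_lt closing_next_inj) => /orP[lt | /andP[/eqP Em lt]]; last first.
  by move: lt; rewrite /walk_index Em.
have nb : b \notin orbit f (cycle_min f a).
  rewrite -fconnect_orbit; apply: contraTN lt => /(cycle_min_eq closing_next_inj).
  by rewrite (cycle_min_idem closing_next_inj) => ->; rewrite ltnn.
by rewrite (memNindex nb) index_mem.
Qed.

Section Crossing.
Variable k : nat.
Hypothesis Hk : k < size w.
Local Notation i := (nth (0, true) w k).1.

Lemma crossing_valid : i.+1 < m.
Proof. exact: (allP Hw) _ (mem_nth _ Hk). Qed.

Definition left_strand : 'I_m :=
  Ordinal (startpos_lt (all_take k Hw) (ltnW crossing_valid)).
Definition right_strand : 'I_m :=
  Ordinal (startpos_lt (all_take k Hw) crossing_valid).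
Local Notation p0 := left_strand.
Local Notation q0 := right_strand.

Lemma position_left : position k p0 = i.
Proof. exact: endpos_startpos. Qed.

Lemma position_right : position k q0 = i.+1.
Proof. exact: endpos_startpos. Qed.

Lemma left_neq_right : p0 != q0.
Proof.
apply/eqP => /(congr1 (position k)) /eqP.
by rewrite position_left position_right (ltn_eqF (ltnSn i)).
Qed.

Lemma position_S p : position k.+1 p = swap_pos i (position k p).
Proof. exact: endpos_take_S. Qed.

Lemma inversions_split k' : inversions k' = inverted k' (p0, q0) + (inverted k' (q0, p0) +
  \sum_(pq | (pq != (p0, q0)) && (pq != (q0, p0))) inverted k' pq).
Proof.
rewrite /inversions (bigD1 (p0, q0)) //= (bigD1 (q0, p0)) //=.
by rewrite xpair_eqE negb_and eq_sym left_neq_right.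
Qed.

(* Crossing k changes the inversion count only through the pair it swaps. *)
Lemma inversions_step :
  inversions k.+1 + (rank q0 < rank p0) = inversions k + (rank p0 < rank q0).
Proof.
have sw1 : swap_pos i i = i.+1 by rewrite /swap_pos eqxx.
have sw2 : swap_pos i i.+1 = i by rewrite /swap_pos (gtn_eqF (ltnSn _)) eqxx.
rewrite !inversions_split.
have -> : inverted k.+1 (p0, q0) = 0.
  by rewrite /inverted /= !position_S position_left position_right sw1 sw2 ltnNge leqnSn.
have -> : inverted k (q0, p0) = 0.
  by rewrite /inverted /= position_left position_right ltnNge leqnSn.
have -> : inverted k.+1 (q0, p0) = (rank p0 < rank q0).
  by rewrite /inverted /= !position_S position_left position_right sw1 sw2 ltnSn.
have -> : inverted k (p0, q0) = (rank q0 < rank p0).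
  by rewrite /inverted /= position_left position_right ltnSn.
have -> : \sum_(pq | (pq != (p0, q0)) && (pq != (q0, p0))) inverted k.+1 pq =
          \sum_(pq | (pq != (p0, q0)) && (pq != (q0, p0))) inverted k pq.
  apply: eq_bigr => [[p q]] /andP[n1 n2]; rewrite /inverted /= !position_S.
  case: (eqVneq p q) => [->|npq]; first by rewrite !ltnn.
  rewrite ltn_swap_pos ?(inj_eq (@position_inj k)) //.
  rewrite -position_right -position_left !(inj_eq (@position_inj k)).
  move: n1 n2; rewrite !xpair_eqE.
  by case: (p == p0); case: (q == q0); case: (p == q0); case: (q == p0).
lia.
Qed.

Lemma strand_meets_k z : has (on_arrow k) (strand z) -> z = p0 \/ z = q0.
Proof.
case/hasP => [[k' b] H]; rewrite /on_arrow /= => /eqP Ek; subst k'.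
move: H; rewrite mem_strand => /andP[_ /eqP E].
case: b E => E; [right|left]; apply: (@position_inj k).
  by rewrite E position_right addn1.
by rewrite E position_left addn0.
Qed.

Lemma left_meets : (k, false) \in strand p0.
Proof. by rewrite mem_strand Hk position_left addn0 eqxx. Qed.

Lemma right_meets : (k, true) \in strand q0.
Proof. by rewrite mem_strand Hk position_right addn1 eqxx. Qed.

Lemma first_met_left : first_met (strand p0) k = (k, false).
Proof.
apply: first_met_single left_meets _.
by rewrite mem_strand Hk position_left addn1 (ltn_eqF (ltnSn _)).
Qed.

Lemma first_met_right : first_met (strand q0) k = (k, true).
Proof.
apply: first_met_single right_meets _.
by rewrite mem_strand Hk position_right addn0 (gtn_eqF (ltnSn _)).
Qed.

(* In a totally ascending diagram the strand of smaller walk rank meets arrow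
   k first, hence at its head: the head is on the right strand exactly when
   the right strand has the smaller walk rank. *)
Lemma ascending_head_side :
  totally_ascending m w -> head_side w k = (rank q0 < rank p0).
Proof.
move=> asc; have fi := closing_next_inj.
have hasl : has (on_arrow k) (strand p0).
  by apply/hasP; exists (k, false); rewrite ?left_meets // /on_arrow.
have hasr : has (on_arrow k) (strand q0).
  by apply/hasP; exists (k, true); rewrite ?right_meets // /on_arrow.
have [lt|lt] : rank p0 < rank q0 \/ rank q0 < rank p0.
  case: (ltngtP (rank p0) (rank q0)) => [|| /(walk_rank_inj fi) E]; [left|right|] => //.
  by move: left_neq_right; rewrite E eqxx.
- have := asc _ _ (is_cycle_min_min fi p0) (is_cycle_min_min fi q0) (cycle_min_le_rank fi lt)
    k false (strand_sub_walk left_meets) (strand_sub_walk right_meets).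
  rewrite (walk_first_met strand_meets_k hasl lt) first_met_left => <-.
  by rewrite ltnNge ltnW.
- have only : forall z, has (on_arrow k) (strand z) -> z = q0 \/ z = p0.
    by move=> z /strand_meets_k []; [right|left].
  have := asc _ _ (is_cycle_min_min fi q0) (is_cycle_min_min fi p0) (cycle_min_le_rank fi lt)
    k true (strand_sub_walk right_meets) (strand_sub_walk left_meets).
  by rewrite (walk_first_met only hasr lt) first_met_right => <-.
Qed.

Lemma crossing_sign : totally_ascending m w ->
  ((if head_side w k then 1 else -1) = (inversions k)%:Z - (inversions k.+1)%:Z)%R.
Proof.
move=> asc; have := inversions_step; rewrite (ascending_head_side asc).
have : rank q0 != rank p0.
  by apply: contra_neq left_neq_right => /(walk_rank_inj closing_next_inj).
by case: (ltngtP (rank q0) (rank p0)) => //=; lia.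
Qed.

End Crossing.

Lemma writhe_inversions : totally_ascending m w ->
  writhe w = ((inversions 0)%:Z - (inversions (size w))%:Z)%R.
Proof.
move=> asc; rewrite /writhe (big_nth (0, true)).
rewrite (telescope_sumr_eq (fun k => - (inversions k)%:Z)%R) //; last first.
  by move=> k /andP[_ Hk]; rewrite (crossing_sign Hk asc) opprK addrC.
by rewrite opprK addrC.
Qed.

(* At the top the strands are in natural order, at the bottom in the order of f,
   so inversions_shift compares the two counts. *)
Lemma inversions_bottom :
  inversions (size w) + #|circles m w| = inversions 0 + m.
Proof.
have top : inversions 0 =
  \sum_(pq : 'I_m * 'I_m) (((pq.1 < pq.2) && (rank pq.2 < rank pq.1)) : nat).
  by rewrite /inversions /inverted /position take0.
have bottom : inversions (size w) =
  \sum_(pq : 'I_m * 'I_m) (((f pq.1 < f pq.2) && (rank pq.2 < rank pq.1)) : nat).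
  by apply: eq_bigr => pq _; rewrite /inverted /position take_size !val_closing_next.
have ncirc := card_cycles closing_next_inj.
have card_split : #|[pred x | is_cycle_min f x]| + #|[pred b | ~~ is_cycle_min f b]| = m.
  by rewrite -[RHS](card_ord m) -(cardC [pred x | is_cycle_min f x]).
rewrite bottom (inversions_shift closing_next_inj) -top /circles /circle_of ncirc; lia.
Qed.

End Braid.

Theorem lemma4p3 (m : nat) (w : seq (nat * bool)) :
  valid_word m w -> totally_ascending m w ->
  (#|circles m w|%:Z = m%:Z + writhe w)%R.
Proof.
move=> Hw asc; rewrite (writhe_inversions Hw asc).
have := inversions_bottom Hw; lia.
Qed.
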